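(* For even $m\ge 18$, let $G^{\mathrm{same}}_m$ be the graph with vertex set $\{u^*\}\cup A\cup\{z,x,y\}\cup L$, where $A=\{a_1,a_2,a_3,a_4\}$ induces a $K_4$, $|L|=m-14$, $u^*$ is adjacent to every vertex of $A\cup\{z\}\cup L$, $z$ is adjacent to $x$ and $y$, $x$ is adjacent to $y$, and there are no other edges (so $G^{\mathrm{same}}_m$ has $m$ edges). Its spectral radius equals the largest root of \[ f_{\mathrm{same}}(x)=x^5-4x^4+(10-m)x^3+(4m-42)x^2+(19-m)x+84-6m, \] and $\rho(G^{\mathrm{same}}_m)<\rho'(m)$.
   Context: $\rho(G)$ denotes the adjacency spectral radius. For even $m$, $\rho'(m)$ is the largest real root of $p_m(x)=x^4-mx^2-(m-2)x+\frac{m}{2}-1$. *)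

From HB Require Import structures.
From mathcomp Require Import all_boot all_order all_algebra all_field.
Set Implicit Arguments. Unset Strict Implicit. Unset Printing Implicit Defensive.
Import Order.TTheory GRing.Theory Num.Theory.
Local Open Scope ring_scope.

Definition is_spectral_radius (n : nat) (M : 'M[algC]_n) (r : algC) : Prop :=
  (exists2 l : algC, eigenvalue M l & `|l| = r) /\
  (forall l : algC, eigenvalue M l -> `|l| <= r).

Definition adjmx (n : nat) (e : rel 'I_n) : 'M[algC]_n :=
  \matrix_(i < n, j < n) (e i j)%:R.

Definition largest_real_root (p : {poly algC}) (r : algC) : Prop :=
  [/\ r \is Num.real, root p r &
      forall s : algC, s \is Num.real -> root p s -> s <= r].

(* G^same_m on vertex set 'I_(m-6), labelled:
   0 = u*, 1..4 = a_1..a_4 (the K4 A), 5 = z, 6 = x, 7 = y, 8..m-7 = L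
   (so |L| = m - 14 when m >= 14). *)
Definition same_edge0 (i j : nat) : bool :=
  [|| (i == 0%N) && ((1 <= j <= 5)%N || (8 <= j)%N),
      [&& (1 <= i <= 4)%N, (1 <= j <= 4)%N & i != j]
    | [&& (5 <= i <= 7)%N, (5 <= j <= 7)%N & i != j] ].

Definition same_edge (i j : nat) : bool := same_edge0 i j || same_edge0 j i.

Definition G_same (m : nat) : rel 'I_(m - 6) :=
  fun i j => same_edge (nat_of_ord i) (nat_of_ord j).

Arguments G_same m : clear implicits.

Definition f_same (m : nat) : {poly algC} :=
  'X^5 - 4%:P * 'X^4 + (10 - m%:R)%:P * 'X^3 + (4 * m%:R - 42)%:P * 'X^2
  + (19 - m%:R)%:P * 'X + (84 - 6 * m%:R)%:P.

(* p_m(x) = x^4 - m x^2 - (m-2) x + m/2 - 1 ; rho'(m) is its largest real root *)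
Definition p_m (m : nat) : {poly algC} :=
  'X^4 - (m%:R)%:P * 'X^2 - (m%:R - 2)%:P * 'X + (m%:R / 2 - 1)%:P.

(* A positive eigenvector of a nonnegative symmetric matrix belongs to its
   spectral radius.  Solving the eigen-equations of G^same_m inwards from the
   pendant vertices L and the triangle zxy gives, for every root r > 3 of
   f_same, a positive eigenvector with eigenvalue r; so f_same has exactly one
   real root above 3, the spectral radius, which exists because
   f_same(4) = 128 - 10m < 0 < f_same(m).
   For the comparison write f_same = (x - 4) p_m + g with g cubic.  Where
   x >= 4 and p_m(x) >= 0 one has x^2 >= m + 2, which forces g(x) > 0 and hence
   f_same(x) > 0.  So p_m is negative at the spectral radius and has a larger
   real root. *)

From HB Require Import structures.
From mathcomp Require Import all_boot all_order all_algebra all_field.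
From mathcomp Require Import ring lra zify.
Import Order.TTheory GRing.Theory Num.Theory.
Set Implicit Arguments. Unset Strict Implicit. Unset Printing Implicit Defensive.
Local Open Scope ring_scope.

Definition fsame_poly (R : fieldType) (M : R) : {poly R} :=
  'X^5 - 4%:P * 'X^4 + (10 - M)%:P * 'X^3 + (4 * M - 42)%:P * 'X^2
  + (19 - M)%:P * 'X + (84 - 6 * M)%:P.

Definition pm_poly (R : fieldType) (M : R) : {poly R} :=
  'X^4 - M%:P * 'X^2 - (M - 2)%:P * 'X + (M / 2 - 1)%:P.

Definition gsame_poly (R : fieldType) (M : R) : {poly R} :=
  fsame_poly M - ('X - 4%:P) * pm_poly M.

Lemma horner_fsame (R : fieldType) (M y : R) : (fsame_poly M).[y] =
  y ^+ 5 - 4 * y ^+ 4 + (10 - M) * y ^+ 3 + (4 * M - 42) * y ^+ 2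
  + (19 - M) * y + (84 - 6 * M).
Proof. by rewrite /fsame_poly !(hornerD, hornerN, hornerM, hornerC, hornerX, hornerXn). Qed.

Lemma horner_pm (R : fieldType) (M y : R) : (pm_poly M).[y] =
  y ^+ 4 - M * y ^+ 2 - (M - 2) * y + (M / 2 - 1).
Proof. by rewrite /pm_poly !(hornerD, hornerN, hornerM, hornerC, hornerX, hornerXn). Qed.

Lemma map_fsame_poly (M : algR) :
  map_poly algRval (fsame_poly M) = fsame_poly (val M).
Proof.
rewrite /fsame_poly !(rmorphD (map_poly algRval)) !(rmorphN (map_poly algRval)).
by rewrite !(rmorphM (map_poly algRval)) /= !(map_polyC algRval) (map_polyX algRval).
Qed.

Lemma map_pm_poly (M : algR) : map_poly algRval (pm_poly M) = pm_poly (val M).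
Proof.
rewrite /pm_poly !(rmorphD (map_poly algRval)) !(rmorphN (map_poly algRval)).
by rewrite !(rmorphM (map_poly algRval)) /= !(map_polyC algRval) (map_polyX algRval).
Qed.

Lemma f_sameE m : f_same m = map_poly algRval (fsame_poly m%:R).
Proof. by rewrite map_fsame_poly rmorph_nat. Qed.

Lemma p_mE m : p_m m = map_poly algRval (pm_poly m%:R).
Proof. by rewrite map_pm_poly rmorph_nat. Qed.

Section Estimates.
Variables (R : realFieldType) (M : R).

Lemma horner_gsame y : (gsame_poly M).[y] =
  10 * y ^+ 3 + (M - 44) * y ^+ 2 + (28 - 11 / 2 * M) * y + 80 - 4 * M.
Proof.
rewrite /gsame_poly hornerD hornerN hornerM hornerXsubC horner_fsame horner_pm.
by field.
Qed.

Lemma pm_ge0_sqr_ge y : 18 <= M -> 4 <= y -> 0 <= (pm_poly M).[y] -> M + 2 <= y ^+ 2.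
Proof.
rewrite horner_pm => M_ge18 y_ge4 p_ge0.
have y2_ge16 : 16 <= y ^+ 2 by rewrite expr2; nra.
nra.
Qed.

Lemma gsame_gt0 y : 18 <= M -> 4 <= y -> M + 2 <= y ^+ 2 -> 0 < (gsame_poly M).[y].
Proof.
move=> M_ge18 y_ge4 y2_ge; rewrite horner_gsame.
have y_ge : 44 / 10 <= y.
  rewrite leNgt; apply/negP => y_lt.
  have y2_le : y ^+ 2 <= 44 / 10 * y by rewrite expr2; apply: ler_wpM2r; lra.
  nra.
nra.
Qed.

Lemma fsame_gt0 y :
  18 <= M -> 4 <= y -> 0 <= (pm_poly M).[y] -> 0 < (fsame_poly M).[y].
Proof.
move=> M_ge18 y_ge4 p_ge0.
have -> : fsame_poly M = gsame_poly M + ('X - 4%:P) * pm_poly M by rewrite subrK.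
rewrite hornerD hornerM hornerXsubC.
apply: ltr_wpDr; last exact: gsame_gt0 (pm_ge0_sqr_ge _ _ _).
by apply: mulr_ge0; rewrite ?subr_ge0.
Qed.

Lemma pm_lt0_at_fsame_root y :
  18 <= M -> 4 <= y -> root (fsame_poly M) y -> (pm_poly M).[y] < 0.
Proof.
move=> M_ge18 y_ge4 /eqP f0; rewrite ltNge; apply/negP => p_ge0.
by have := fsame_gt0 M_ge18 y_ge4 p_ge0; rewrite f0 ltxx.
Qed.

Lemma pm_gt0 y : 18 <= M -> M <= y -> 0 < (pm_poly M).[y].
Proof.
rewrite horner_pm => M_ge18 y_geM.
have My2_le : M * y ^+ 2 <= y ^+ 3 by rewrite (exprS _ 2); apply: ler_wpM2r => //; nra.
nra.
Qed.

Lemma fsame_lt0_at4 : 18 <= M -> (fsame_poly M).[4] < 0.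
Proof. rewrite horner_fsame; lra. Qed.

Lemma pm_poly_neq0 : 18 <= M -> pm_poly M != 0.
Proof.
move=> M_ge18; apply: contraTneq (pm_gt0 M_ge18 (lexx M)) => ->.
by rewrite horner0 ltxx.
Qed.

End Estimates.

Lemma fsame_root_ge4 (R : rcfType) (M : R) :
  18 <= M -> exists2 r, 4 <= r & root (fsame_poly M) r.
Proof.
move=> M_ge18.
have [r /andP[r_ge4 _] fr] : exists2 r, 4 <= r <= M & root (fsame_poly M) r.
  apply: poly_ivt; first lra.
  rewrite ltW ?fsame_lt0_at4 //= ltW // fsame_gt0 //; first lra.
  by rewrite ltW // pm_gt0.
by exists r.
Qed.

Lemma pm_root_gt (R : rcfType) (M r : R) : 18 <= M -> 4 <= r ->
  root (fsame_poly M) r -> exists2 s, r < s & root (pm_poly M) s.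
Proof.
move=> M_ge18 r_ge4 fr.
have p_lt0 := pm_lt0_at_fsame_root M_ge18 r_ge4 fr.
have [s /andP[r_le_s _] ps] : exists2 s, r <= s <= r + M & root (pm_poly M) s.
  apply: poly_ivt; first lra.
  by rewrite ltW //= ltW // pm_gt0 //; lra.
exists s => //; rewrite lt_neqAle r_le_s andbT.
by apply: contraTneq ps => <-; rewrite rootE lt_eqF.
Qed.

Lemma norm_eigenvalue_le_pos_eigenvector (R : numFieldType) n (A : 'M[R]_n)
    (c : 'cV_n) (w : 'rV_n) r l :
  (forall i j, 0 <= A i j) -> (forall i, 0 < c i 0) -> A *m c = r *: c ->
  w != 0 -> w *m A = l *: w -> `|l| <= r.
Proof.
move=> A_ge0 c_gt0 Ac w_neq0 wA.
pose s := \sum_j `|w 0 j| * c j 0.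
have [j wj_neq0] : exists j, w 0 j != 0.
  apply/existsP; apply: contraNT w_neq0 => /existsPn w0.
  by apply/eqP/rowP => j; rewrite mxE; apply/eqP/negPn/w0.
have s_gt0 : 0 < s.
  rewrite /s (bigD1 j) //=; apply: ltr_pwDl.
    by rewrite mulr_gt0 ?normr_gt0.
  by apply: sumr_ge0 => i _; exact: mulr_ge0 (normr_ge0 _) (ltW (c_gt0 i)).
suff : `|l| * s <= r * s by rewrite ler_pM2r.
have -> : `|l| * s = \sum_j `|\sum_i w 0 i * A i j| * c j 0.
  rewrite mulr_sumr; apply: eq_bigr => k _.
  by have := congr1 (fun u : 'rV_n => u 0 k) wA; rewrite !mxE => ->; rewrite normrM mulrA.
have -> : r * s = \sum_i `|w 0 i| * \sum_j A i j * c j 0.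
  rewrite mulr_sumr; apply: eq_bigr => i _.
  by have := congr1 (fun u : 'cV_n => u i 0) Ac; rewrite !mxE => ->; rewrite mulrCA.
under [X in _ <= X]eq_bigr do rewrite mulr_sumr.
rewrite exchange_big /=; apply: ler_sum => k _.
apply: le_trans (ler_wpM2r (ltW (c_gt0 k)) (ler_norm_sum _ _ _)) _.
rewrite mulr_suml; apply: ler_sum => i _.
by rewrite normrM (ger0_norm (A_ge0 i k)) -mulrA.
Qed.

Lemma is_spectral_radius_pos_eigenvector n (A : 'M[algC]_n) (v : 'rV_n) r :
  A^T = A -> (forall i j, 0 <= A i j) -> (forall i, 0 < v 0 i) -> v != 0 ->
  v *m A = r *: v -> is_spectral_radius A r.
Proof.
move=> A_sym A_ge0 v_gt0 v_neq0 vA.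
have Avt : A *m v^T = r *: v^T by rewrite -{1}A_sym -trmx_mul vA linearZ.
have vt_gt0 i : 0 < v^T i 0 by rewrite mxE.
have le_r l : eigenvalue A l -> `|l| <= r.
  case/eigenvalueP => w wA w_neq0.
  exact: norm_eigenvalue_le_pos_eigenvector A_ge0 vt_gt0 Avt w_neq0 wA.
have r_eig : eigenvalue A r by apply/eigenvalueP; exists v.
have r_ge0 : 0 <= r := le_trans (normr_ge0 r) (le_r r r_eig).
by split=> //; exists r; rewrite ?ger0_norm.
Qed.

Lemma is_spectral_radius_uniq n (A : 'M[algC]_n) r s :
  is_spectral_radius A r -> is_spectral_radius A s -> r = s.
Proof.
move=> [[l1 l1_eig <-] le_r] [[l2 l2_eig <-] le_s].
by apply/le_anti; rewrite le_s ?le_r.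
Qed.

Lemma largest_real_root_exists (p : {poly algC}) x :
  p != 0 -> x \is Num.real -> root p x -> exists2 r, largest_real_root p r & x <= r.
Proof.
move=> p_neq0 xR px.
have [rs p_eq] := closed_field_poly_normal p.
have root_rs z : root p z = (z \in rs).
  by rewrite p_eq rootZ ?lead_coef_eq0 // root_prod_XsubC.
pose S : seq algR := pmap insub rs.
have memS (z : algR) : (z \in S) = root p (val z) by rewrite mem_pmap_sub root_rs.
pose r := \big[Num.max/in_algR xR]_(z <- S) z.
have x_le_r : in_algR xR <= r by exact: bigmax_ge_id.
exists (val r) => //; split; first exact: algRvalP.
- rewrite /r big_seq; elim/big_ind: _ => // [a b pa pb|z]; last by rewrite memS.
  by rewrite maxEle; case: ifP.
- move=> s sR ps; suff : in_algR sR <= r by [].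
  by apply: le_bigmax_seq; rewrite ?memS.
Qed.

Lemma same_edge_pendant_l i k : (8 <= i)%N -> same_edge i k = (k == 0)%N.
Proof. by rewrite /same_edge /same_edge0 => i_ge8; apply/idP/idP; lia. Qed.

Lemma same_edge_pendant_r i k : (8 <= k)%N -> same_edge i k = (i == 0)%N.
Proof. by rewrite /same_edge /same_edge0 => k_ge8; apply/idP/idP; lia. Qed.

(* Weights of u*, of A, of z, of x and y, and of L (vertices 0, 1..4, 5, 6..7
   and 8..); every eigen-equation holds identically in r except the one at u*,
   which is f_same(r) = 0. *)
Definition same_weight (r : algC) (i : nat) : algC :=
  if i == 0%N then r * (r - 3) * (r ^+ 2 - r - 2)
  else if (i <= 4)%N then r * (r ^+ 2 - r - 2)
  else if i == 5%N then r * (r - 1) * (r - 3)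
  else if (i <= 7)%N then r * (r - 3)
  else (r - 3) * (r ^+ 2 - r - 2).

Lemma same_weight_pendant r i :
  (8 <= i)%N -> same_weight r i = (r - 3) * (r ^+ 2 - r - 2).
Proof.
move=> i_ge8; rewrite /same_weight.
by rewrite ifN ?ifN ?ifN ?ifN //; lia.
Qed.

Lemma same_weight_gt0 r i : 3 < r -> 0 < same_weight r i.
Proof.
move=> r_gt3.
have r_gt0 : 0 < r by apply: lt_trans r_gt3.
have r3_gt0 : 0 < r - 3 by rewrite subr_gt0.
have r1_gt0 : 0 < r - 1 by rewrite subr_gt0 (lt_trans _ r_gt3) ?ltr1n.
have q_gt0 : 0 < r ^+ 2 - r - 2.
  have -> : r ^+ 2 - r - 2 = (r - 2) * (r + 1) by ring.
  apply: mulr_gt0; last exact: addr_gt0.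
  by rewrite subr_gt0 (lt_trans _ r_gt3) ?ltr_nat.
by rewrite /same_weight; repeat case: ifP => _; rewrite ?mulr_gt0.
Qed.

Lemma same_weight_eigen m r : (18 <= m)%N -> root (f_same m) r ->
  (\row_(i < m - 6) same_weight r i) *m adjmx (G_same m)
  = r *: \row_(i < m - 6) same_weight r i.
Proof.
move=> m_ge18 /eqP f_r; change ((fsame_poly (m%:R : algC)).[r] = 0) in f_r.
apply/rowP => j; rewrite !mxE.
under eq_bigr do rewrite !mxE.
rewrite -(big_mkord xpredT (fun i => same_weight r i * (same_edge i j)%:R)).
rewrite (big_cat_nat _ (n := 8)) //=; last by lia.
rewrite [X in _ + X](eq_big_nat _ _
  (F2 := fun=> same_weight r 8 * (same_edge 8 j)%:R)); last first.
  by move=> i /andP[i_ge8 _]; rewrite !same_weight_pendant ?same_edge_pendant_l.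
rewrite sumr_const_nat !big_nat_recl // big_geq // addr0.
have -> : (m - 6 - 8 = m - 14)%N by lia.
case: j => k /= _; have [k_lt8 | k_ge8] := ltnP k 8.
  case: k k_lt8 => [|[|[|[|[|[|[|[|k]]]]]]]] // _; rewrite /same_weight /=;
    rewrite ?mulr1 ?mulr0 ?addr0 ?add0r ?mul0rn; try ring.
  rewrite -[_ *+ (m - 14)]mulr_natr natrB; last by lia.
  by rewrite -[RHS]subr0 -f_r horner_fsame; ring.
rewrite !same_edge_pendant_r // (same_weight_pendant r k_ge8) /=.
by rewrite !mulr0 mul0rn !addr0 mulr1 /same_weight /=; ring.
Qed.

Lemma adjmx_G_same_sym m : (adjmx (G_same m))^T = adjmx (G_same m).
Proof. by apply/matrixP => i j; rewrite !mxE /G_same /same_edge orbC. Qed.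

Lemma G_same_spectral_radius m r : (18 <= m)%N -> 3 < r -> root (f_same m) r ->
  is_spectral_radius (adjmx (G_same m)) r.
Proof.
move=> m_ge18 r_gt3 fr; set v := \row_(i < m - 6) same_weight r i.
have v_gt0 i : 0 < v 0 i by rewrite mxE same_weight_gt0.
apply: (is_spectral_radius_pos_eigenvector (adjmx_G_same_sym m) _ v_gt0).
- by move=> i j; rewrite mxE ler0n.
- have i0 : 'I_(m - 6) by apply: (@Ordinal _ 0); lia.
  by apply: contraTneq (v_gt0 i0) => ->; rewrite mxE ltxx.
- exact: same_weight_eigen.
Qed.

Lemma f_same_largest_real_root m r : (18 <= m)%N -> 3 < r -> root (f_same m) r ->
  largest_real_root (f_same m) r.
Proof.
move=> m_ge18 r_gt3 fr; have r_gt0 : 0 < r by apply: lt_trans r_gt3.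
split => //; first exact: gtr0_real.
move=> s sR fs; have [s_le3 | s_gt3] := real_leP sR (realn _ 3).
  exact: le_trans s_le3 (ltW r_gt3).
by rewrite (is_spectral_radius_uniq (G_same_spectral_radius m_ge18 s_gt3 fs)
  (G_same_spectral_radius m_ge18 r_gt3 fr)).
Qed.

Theorem proposition6p2 (m : nat) (hm_even : ~~ odd m) (hm : (18 <= m)%N) :
  exists rho : algC,
    [/\ is_spectral_radius (adjmx (G_same m)) rho,
        largest_real_root (f_same m) rho &
        exists2 rho' : algC, largest_real_root (p_m m) rho' & rho < rho'].
Proof.
have M_ge18 : 18 <= (m%:R : algR) by rewrite ler_nat.
have [r r_ge4 fr] := fsame_root_ge4 M_ge18.
have [s r_lt_s ps] := pm_root_gt M_ge18 r_ge4 fr.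
have frC : root (f_same m) (val r) by rewrite f_sameE fmorph_root.
have r_gt3 : 3 < val r.
  have r_gt3R : (3 : algR) < r := lt_le_trans (ltr_nat _ 3 4) r_ge4.
  by rewrite -(rmorph_nat algRval 3).
have p_m_neq0 : p_m m != 0 by rewrite p_mE map_poly_eq0 pm_poly_neq0.
have psC : root (p_m m) (val s) by rewrite p_mE fmorph_root.
have [rho' rho'_max s_le] := largest_real_root_exists p_m_neq0 (algRvalP s) psC.
exists (val r); split.
- exact: G_same_spectral_radius.
- exact: f_same_largest_real_root.
- by exists rho' => //; apply: lt_le_trans s_le.
Qed.
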